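(* Let $X$ be a real lush Banach space. Then $n_L(X)=1$.
   Context: A real Banach space $X$ is lush if for every $x,y\in S_X$ and every $\varepsilon>0$ there is $y^*\in S_{X^*}$ such that, with the slice $S=S(y^*,\varepsilon)=\{z\in B_X: y^*(z)>1-\varepsilon\}$, one has $y\in S$ and $\mathrm{dist}(x,\mathrm{aco}(S))<\varepsilon$, where $\mathrm{aco}(S)$ is the absolutely convex hull of $S$. $\mathrm{Lip}_0(X)$ is the set of Lipschitz maps $T:X\to X$ with $T(0)=0$, with $\|T\|_L=\sup\{\|Tx-Ty\|/\|x-y\|: x\neq y\}$. $D(x)=\{x^*\in X^*: x^*(x)=\|x^*\|\|x\|=\|x\|^2\}$; $\omega(T)=\sup\{|f(Tx-Ty)|/\|x-y\|^2: x\neq y,\ f\in D(x-y)\}$; $n_L(X)=\inf\{\omega(T): T\in\mathrm{Lip}_0(X),\ \|T\|_L=1\}$. *)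

From Stdlib Require Import Reals Lra List.
Open Scope R_scope.

Record NormedSpace := {
  car :> Type;
  vzero : car;
  vadd : car -> car -> car;
  vopp : car -> car;
  vscal : R -> car -> car;
  vnorm : car -> R;
  vadd_assoc : forall x y z, vadd x (vadd y z) = vadd (vadd x y) z;
  vadd_comm : forall x y, vadd x y = vadd y x;
  vadd_0l : forall x, vadd vzero x = x;
  vadd_oppl : forall x, vadd (vopp x) x = vzero;
  vscal_assoc : forall a b x, vscal a (vscal b x) = vscal (a * b) x;
  vscal_1 : forall x, vscal 1 x = x;
  vscal_distr_v : forall a x y, vscal a (vadd x y) = vadd (vscal a x) (vscal a y);
  vscal_distr_s : forall a b x, vscal (a + b) x = vadd (vscal a x) (vscal b x);
  vnorm_eq0 : forall x, vnorm x = 0 <-> x = vzero;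
  vnorm_scal : forall a x, vnorm (vscal a x) = Rabs a * vnorm x;
  vnorm_triangle : forall x y, vnorm (vadd x y) <= vnorm x + vnorm y
}.

Arguments vzero {_}.
Arguments vadd {_} _ _.
Arguments vopp {_} _.
Arguments vscal {_} _ _.
Arguments vnorm {_} _.

Definition vsub {X : NormedSpace} (x y : X) : X := vadd x (vopp y).

Definition complete (X : NormedSpace) : Prop :=
  forall u : nat -> X,
    (forall eps, 0 < eps -> exists N, forall n m, (N <= n)%nat -> (N <= m)%nat ->
        vnorm (vsub (u n) (u m)) < eps) ->
    exists l : X, forall eps, 0 < eps -> exists N, forall n, (N <= n)%nat ->
        vnorm (vsub (u n) l) < eps.

Definition in_dual (X : NormedSpace) (f : X -> R) : Prop :=
  (forall x y, f (vadd x y) = f x + f y) /\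
  (forall a x, f (vscal a x) = a * f x) /\
  (exists M, forall x, Rabs (f x) <= M * vnorm x).

Definition dual_norm_is {X : NormedSpace} (f : X -> R) (c : R) : Prop :=
  is_lub (fun r => exists x : X, vnorm x <= 1 /\ r = Rabs (f x)) c.

Definition in_dual_sphere {X : NormedSpace} (f : X -> R) : Prop :=
  in_dual X f /\ dual_norm_is f 1.

Definition slice {X : NormedSpace} (ystar : X -> R) (eps : R) (z : X) : Prop :=
  vnorm z <= 1 /\ ystar z > 1 - eps.

Fixpoint lincomb {X : NormedSpace} (l : list (R * X)) : X :=
  match l with
  | nil => vzero
  | (a, s) :: l' => vadd (vscal a s) (lincomb l')
  end.

Fixpoint sum_abs_coef {X : NormedSpace} (l : list (R * X)) : R :=
  match l with
  | nil => 0
  | (a, _) :: l' => Rabs a + sum_abs_coef l'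
  end.

Definition aco {X : NormedSpace} (S : X -> Prop) (z : X) : Prop :=
  exists l : list (R * X),
    (forall p, In p l -> S (snd p)) /\ sum_abs_coef l <= 1 /\ z = lincomb l.

(** dist(x, A) < eps  (dist = inf over A of ||x - a||; this is its unfolding). *)
Definition dist_lt {X : NormedSpace} (x : X) (A : X -> Prop) (eps : R) : Prop :=
  exists a, A a /\ vnorm (vsub x a) < eps.

Definition lush (X : NormedSpace) : Prop :=
  forall x y : X, vnorm x = 1 -> vnorm y = 1 ->
  forall eps, 0 < eps ->
  exists ystar : X -> R,
    in_dual_sphere ystar /\
    slice ystar eps y /\
    dist_lt x (aco (slice ystar eps)) eps.

Definition Lip0 {X : NormedSpace} (T : X -> X) : Prop :=
  T vzero = vzero /\
  exists K, forall x y : X, vnorm (vsub (T x) (T y)) <= K * vnorm (vsub x y).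

Definition lip_norm_is {X : NormedSpace} (T : X -> X) (c : R) : Prop :=
  is_lub (fun r => exists x y : X, x <> y /\
                     r = vnorm (vsub (T x) (T y)) / vnorm (vsub x y)) c.

Definition in_D {X : NormedSpace} (x : X) (f : X -> R) : Prop :=
  in_dual X f /\
  exists c, dual_norm_is f c /\ f x = c * vnorm x /\ c * vnorm x = vnorm x ^ 2.

Definition omega_is {X : NormedSpace} (T : X -> X) (w : R) : Prop :=
  is_lub (fun r => exists (x y : X) (f : X -> R),
            x <> y /\ in_D (vsub x y) f /\
            r = Rabs (f (vsub (T x) (T y))) / (vnorm (vsub x y) ^ 2)) w.

Definition is_glb (E : R -> Prop) (m : R) : Prop :=
  (forall r, E r -> m <= r) /\ (forall b, (forall r, E r -> b <= r) -> b <= m).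

Definition nonlinear_numerical_index_is (X : NormedSpace) (m : R) : Prop :=
  is_glb (fun w => exists T : X -> X, Lip0 T /\ lip_norm_is T 1 /\ omega_is T w) m.

(* The upper bound n_L(X) <= 1 is witnessed by the identity map.  For the lower bound let
   ||T||_L = 1 and suppose omega(T) = w < 1.  Pick x, y with ||Tx - Ty|| > (1 - eps)||x - y||
   and apply lushness to the directions v = (x - y)/||x - y|| and z = (Tx - Ty)/||Tx - Ty||:
   a norm-one functional g nearly norms z, and v is eps-close to an absolutely convex
   combination sum lambda_i s_i of points of the slice S(g, eps).  Walking from y towards x
   along the steps c lambda_i s_i, the map g o T must grow almost as much as ||x - y||, so
   some single step is stretched by T almost isometrically as seen by g
   (some_step_is_large, packaged with the sign bookkeeping as lush_stretched_step).
   Enlarging that step by a small multiple of its image and testing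
   omega(T) against a norming functional of the enlarged step contradicts w < 1
   (large_step_bound). *)

From Stdlib Require Import Reals Lra List ClassicalEpsilon.
From mathcomp Require boolp classical_sets.
Open Scope R_scope.

Section VectorAlgebra.
Context {X : NormedSpace}.
Implicit Types x y z u a : X.

Lemma vadd_0r x : vadd x vzero = x.
Proof. rewrite vadd_comm. apply vadd_0l. Qed.

Lemma vadd_oppr x : vadd x (vopp x) = vzero.
Proof. rewrite vadd_comm. apply vadd_oppl. Qed.

Lemma vnorm0 : vnorm (@vzero X) = 0.
Proof. apply vnorm_eq0. reflexivity. Qed.

Lemma vscal_0 x : vscal 0 x = vzero.
Proof. apply vnorm_eq0. rewrite vnorm_scal, Rabs_R0. ring. Qed.

Lemma vscal_zero (r : R) : vscal r (@vzero X) = vzero.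
Proof. apply vnorm_eq0. rewrite vnorm_scal, vnorm0. ring. Qed.

Lemma vopp_unique a x : vadd a x = vzero -> a = vopp x.
Proof.
  intro H. rewrite <- (vadd_0r a), <- (vadd_oppr x), vadd_assoc, H. apply vadd_0l.
Qed.

Lemma vopp_scal x : vopp x = vscal (-1) x.
Proof.
  symmetry. apply vopp_unique. rewrite <- (vscal_1 _ x) at 2.
  rewrite <- vscal_distr_s. replace (-1 + 1) with 0 by ring. apply vscal_0.
Qed.

Lemma vopp_add x y : vopp (vadd x y) = vadd (vopp x) (vopp y).
Proof. rewrite !vopp_scal. apply vscal_distr_v. Qed.

Lemma vopp_opp x : vopp (vopp x) = x.
Proof. symmetry. apply vopp_unique. apply vadd_oppr. Qed.

Lemma vscal_opp (r : R) x : vscal r (vopp x) = vopp (vscal r x).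
Proof. rewrite !vopp_scal, !vscal_assoc. f_equal. ring. Qed.

Lemma vadd_ACA a x y z : vadd (vadd a x) (vadd y z) = vadd (vadd a y) (vadd x z).
Proof.
  rewrite <- !vadd_assoc. f_equal. rewrite !vadd_assoc. f_equal. apply vadd_comm.
Qed.

Lemma vsub_diag x : vsub x x = vzero.
Proof. apply vadd_oppr. Qed.

Lemma vsub_0r x : vsub x vzero = x.
Proof. unfold vsub. rewrite <- (vopp_unique vzero vzero) by apply vadd_0l. apply vadd_0r. Qed.

Lemma vsub_eq0 x y : vsub x y = vzero -> x = y.
Proof.
  unfold vsub. intro H. rewrite <- (vadd_0r x), <- (vadd_oppl _ y), vadd_assoc, H.
  apply vadd_0l.
Qed.

Lemma vsub_add_cancel x y : vadd (vsub x y) y = x.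
Proof. unfold vsub. rewrite <- vadd_assoc, vadd_oppl. apply vadd_0r. Qed.

Lemma vsub_addl a u : vsub (vadd a u) a = u.
Proof.
  unfold vsub. rewrite (vadd_comm _ a u), <- vadd_assoc, vadd_oppr. apply vadd_0r.
Qed.

Lemma vsub_add2 a u v : vsub (vadd a u) (vadd a v) = vsub u v.
Proof.
  unfold vsub. rewrite vopp_add, (vadd_comm _ a u), <- vadd_assoc. f_equal.
  rewrite vadd_assoc, vadd_oppr. apply vadd_0l.
Qed.

Lemma vscal_sub (r : R) x y : vscal r (vsub x y) = vsub (vscal r x) (vscal r y).
Proof. unfold vsub. rewrite vscal_distr_v, vscal_opp. reflexivity. Qed.

Lemma vnorm_opp x : vnorm (vopp x) = vnorm x.
Proof. rewrite vopp_scal, vnorm_scal, Rabs_left by lra. ring. Qed.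

Lemma vnorm_nonneg x : 0 <= vnorm x.
Proof.
  pose proof (vnorm_triangle _ x (vopp x)) as H.
  rewrite vadd_oppr, vnorm0, vnorm_opp in H. lra.
Qed.

Lemma vnorm_pos x : x <> vzero -> 0 < vnorm x.
Proof.
  intro Hx. destruct (Rle_lt_or_eq_dec _ _ (vnorm_nonneg x)) as [H|H]; [exact H|].
  exfalso. apply Hx, vnorm_eq0. now symmetry.
Qed.

Lemma vnorm_sub_pos x y : x <> y -> 0 < vnorm (vsub x y).
Proof. intro H. apply vnorm_pos. intro E. apply H, vsub_eq0, E. Qed.

Lemma vnorm_sub_sym x y : vnorm (vsub x y) = vnorm (vsub y x).
Proof.
  rewrite <- vnorm_opp. f_equal. unfold vsub. rewrite vopp_add, vopp_opp. apply vadd_comm.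
Qed.

Lemma vnorm_sub_ge x z : vnorm z - vnorm x <= vnorm (vsub x z).
Proof.
  pose proof (vnorm_triangle _ (vsub z x) x) as H.
  rewrite vsub_add_cancel, vnorm_sub_sym in H. lra.
Qed.

End VectorAlgebra.

Section LinearFunctionals.
Context {X : NormedSpace} {f : X -> R} (Hf : in_dual X f).

Lemma lin_add (x y : X) : f (vadd x y) = f x + f y.
Proof. exact (proj1 Hf x y). Qed.

Lemma lin_scal (r : R) (x : X) : f (vscal r x) = r * f x.
Proof. exact (proj1 (proj2 Hf) r x). Qed.

Lemma lin0 : f vzero = 0.
Proof. rewrite <- (vscal_0 vzero), lin_scal. ring. Qed.

Lemma lin_sub (x y : X) : f (vsub x y) = f x - f y.
Proof. unfold vsub. rewrite lin_add, vopp_scal, lin_scal. ring. Qed.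

Lemma dual_bound : dual_norm_is f 1 -> forall x, Rabs (f x) <= vnorm x.
Proof.
  intros [Hub _] x. destruct (classic (x = vzero)) as [->|Hx].
  - rewrite lin0, Rabs_R0, vnorm0. lra.
  - pose proof (vnorm_pos x Hx) as Hp.
    assert (Hn : vnorm (vscal (/ vnorm x) x) <= 1).
    { rewrite vnorm_scal, Rabs_pos_eq, Rinv_l by (try apply Rlt_le, Rinv_0_lt_compat; lra). lra. }
    pose proof (Hub _ (ex_intro _ _ (conj Hn eq_refl))) as H.
    rewrite lin_scal, Rabs_mult, Rabs_pos_eq in H by (apply Rlt_le, Rinv_0_lt_compat; lra).
    apply Rmult_le_reg_l with (/ vnorm x); [apply Rinv_0_lt_compat; lra|].
    rewrite Rinv_l by lra. lra.
Qed.

End LinearFunctionals.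

Lemma in_dual_scale {X : NormedSpace} (f : X -> R) (k : R) :
  in_dual X f -> in_dual X (fun x => k * f x).
Proof.
  intros Hf. split; [|split].
  - intros x y. rewrite (lin_add Hf). ring.
  - intros a x. rewrite (lin_scal Hf). ring.
  - destruct Hf as [_ [_ [M HM]]]. exists (Rabs k * M). intro x.
    rewrite Rabs_mult, Rmult_assoc. apply Rmult_le_compat_l; [apply Rabs_pos | apply HM].
Qed.

Lemma dual_norm_attained {X : NormedSpace} (f : X -> R) (c : R) (d : X) :
  in_dual X f -> (forall x, Rabs (f x) <= c * vnorm x) ->
  d <> vzero -> Rabs (f d) = c * vnorm d -> dual_norm_is f c.
Proof.
  intros Hf Hb Hd Hfd. pose proof (vnorm_pos d Hd) as Hp.
  assert (Hc : 0 <= c).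
  { apply Rmult_le_reg_r with (vnorm d); [lra|]. rewrite <- Hfd. pose proof (Rabs_pos (f d)). lra. }
  split.
  - intros r [x [Hx ->]]. pose proof (Hb x). pose proof (Rmult_le_compat_l c _ _ Hc Hx). lra.
  - intros b Hub. apply Hub. exists (vscal (/ vnorm d) d). split.
    + rewrite vnorm_scal, Rabs_pos_eq, Rinv_l by (try apply Rlt_le, Rinv_0_lt_compat; lra). lra.
    + rewrite (lin_scal Hf), Rabs_mult, Rabs_pos_eq, Hfd by (apply Rlt_le, Rinv_0_lt_compat; lra).
      field. lra.
Qed.

Definition norming {X : NormedSpace} (f : X -> R) (d : X) : Prop :=
  in_dual X f /\ (forall x, Rabs (f x) <= vnorm x) /\ f d = vnorm d.

Lemma norming_in_D {X : NormedSpace} (f : X -> R) (d : X) :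
  norming f d -> d <> vzero -> in_D d (fun x => vnorm d * f x).
Proof.
  intros [Hf [Hb Hfd]] Hd. pose proof (vnorm_nonneg d) as Hn.
  split; [now apply in_dual_scale|]. exists (vnorm d). split; [|split].
  - apply (dual_norm_attained _ _ d (in_dual_scale f _ Hf)); [|exact Hd|].
    + intro x. rewrite Rabs_mult, Rabs_pos_eq by exact Hn. apply Rmult_le_compat_l; auto.
    + rewrite Hfd, Rabs_pos_eq by (apply Rmult_le_pos; exact Hn). reflexivity.
  - rewrite Hfd. reflexivity.
  - ring.
Qed.

Lemma glb_exists (E : R -> Prop) (m : R) :
  (exists r, E r) -> (forall r, E r -> m <= r) -> exists g, is_glb E g.
Proof.
  intros [r0 Hr0] Hm.
  destruct (completeness (fun r => E (- r))) as [L [HL1 HL2]].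
  - exists (- m). intros r Hr. apply Hm in Hr. lra.
  - exists (- r0). rewrite Ropp_involutive. exact Hr0.
  - exists (- L). split.
    + intros r Hr. assert (- r <= L) by (apply HL1; rewrite Ropp_involutive; exact Hr). lra.
    + intros b Hb. assert (L <= - b) by (apply HL2; intros r Hr; apply Hb in Hr; lra). lra.
Qed.

Lemma glb_le (E : R -> Prop) (g r : R) : is_glb E g -> E r -> g <= r.
Proof. intros [H _]. auto. Qed.

Lemma glb_add (E1 E2 : R -> Prop) (g1 g2 v : R) : is_glb E1 g1 -> is_glb E2 g2 ->
  (forall r1 r2, E1 r1 -> E2 r2 -> v <= r1 + r2) -> v <= g1 + g2.
Proof.
  intros [_ H1] [_ H2] H.
  assert (v - g1 <= g2); [|lra].
  apply H2. intros r2 Hr2.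
  assert (v - r2 <= g1); [|lra].
  apply H1. intros r1 Hr1. specialize (H r1 r2 Hr1 Hr2). lra.
Qed.

Lemma glb_scale (E : R -> Prop) (g v a : R) : 0 < a -> is_glb E g ->
  (forall r, E r -> v <= a * r) -> v <= a * g.
Proof.
  intros Ha [_ Hg] H.
  assert (v / a <= g).
  { apply Hg. intros r Hr. specialize (H r Hr).
    apply Rmult_le_reg_l with a; [lra|]. field_simplify; lra. }
  apply Rmult_le_reg_l with (/ a); [apply Rinv_0_lt_compat; lra|].
  rewrite <- Rmult_assoc, Rinv_l by lra. unfold Rdiv in H0. lra.
Qed.

Section Sublinear.
Context {X : NormedSpace}.

Definition sublinear (p : X -> R) : Prop :=
  (forall x y, p (vadd x y) <= p x + p y) /\
  (forall a x, 0 < a -> p (vscal a x) = a * p x).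

Lemma sublinear_intro (p : X -> R) :
  (forall x y, p (vadd x y) <= p x + p y) ->
  (forall a x, 0 < a -> p (vscal a x) <= a * p x) -> sublinear p.
Proof.
  intros Hs Hh. split; [exact Hs|]. intros a x Ha. apply Rle_antisym; [auto|].
  pose proof (Hh (/ a) (vscal a x) (Rinv_0_lt_compat _ Ha)) as H.
  rewrite vscal_assoc, Rinv_l, vscal_1 in H by lra.
  apply Rmult_le_compat_l with (r := a) in H; [|lra].
  rewrite <- Rmult_assoc, Rinv_r, Rmult_1_l in H by lra. exact H.
Qed.

Lemma sublinear_zero (p : X -> R) : sublinear p -> p vzero = 0.
Proof.
  intros [_ Hh]. pose proof (Hh 2 vzero ltac:(lra)) as H. rewrite vscal_zero in H. lra.
Qed.

Lemma sublinear_scal_nonneg (p : X -> R) (t : R) (x : X) :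
  sublinear p -> 0 <= t -> p (vscal t x) = t * p x.
Proof.
  intros Hp Ht. destruct (Req_dec t 0) as [->|Hn].
  - rewrite vscal_0, sublinear_zero by exact Hp. ring.
  - apply (proj2 Hp). lra.
Qed.

Lemma sublinear_sub (p : X -> R) (x y : X) : sublinear p -> p y - p x <= p (vsub y x).
Proof.
  intros Hp. pose proof (proj1 Hp (vsub y x) x) as H. rewrite vsub_add_cancel in H. lra.
Qed.

Lemma sublinear_chain_inf (q : X -> R) (A : (X -> R) -> Prop) :
  (exists p, A p) -> (forall p, A p -> sublinear p /\ forall x, p x <= q x) ->
  (forall p p', A p -> A p' -> (forall x, p x <= p' x) \/ (forall x, p' x <= p x)) ->
  exists pinf, sublinear pinf /\ (forall x, pinf x <= q x) /\
               forall p, A p -> forall x, pinf x <= p x.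
Proof.
  intros [p0 Hp0] HA Hchain.
  set (V := fun x r => exists p, A p /\ r = p x).
  destruct (choice (fun x g => is_glb (V x) g)) as [pinf Hpinf].
  { intro x. apply glb_exists with (- q (vopp x)).
    - exists (p0 x), p0. auto.
    - intros r [p [Hp ->]]. destruct (HA p Hp) as [Hs Hq].
      pose proof (sublinear_sub p (vopp x) vzero Hs) as H.
      rewrite sublinear_zero in H by exact Hs.
      unfold vsub in H. rewrite vopp_opp, vadd_0l in H. pose proof (Hq (vopp x)). lra. }
  assert (Hlow : forall p x, A p -> pinf x <= p x).
  { intros p x Hp. apply (glb_le _ _ _ (Hpinf x)). exists p. auto. }
  exists pinf. split; [|split; [|intros; auto]].
  - apply sublinear_intro.
    + intros x y. apply (glb_add _ _ _ _ _ (Hpinf x) (Hpinf y)).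
      intros r1 r2 [p1 [Hp1 ->]] [p2 [Hp2 ->]].
      destruct (Hchain p1 p2 Hp1 Hp2) as [H|H].
      * pose proof (Hlow p1 (vadd x y) Hp1). pose proof (proj1 (proj1 (HA p1 Hp1)) x y).
        specialize (H y). lra.
      * pose proof (Hlow p2 (vadd x y) Hp2). pose proof (proj1 (proj1 (HA p2 Hp2)) x y).
        specialize (H x). lra.
    + intros a x Ha. apply (glb_scale _ _ _ _ Ha (Hpinf x)).
      intros r [p [Hp ->]]. rewrite <- (proj2 (proj1 (HA p Hp)) a x Ha). auto.
  - intro x. apply Rle_trans with (p0 x); [auto|]. apply (HA p0 Hp0).
Qed.

Lemma minimal_sublinear_below (q : X -> R) : sublinear q ->
  exists p, sublinear p /\ (forall x, p x <= q x) /\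
    forall s, sublinear s -> (forall x, s x <= p x) -> forall x, p x <= s x.
Proof.
  intros Hq.
  set (T := {p : X -> R | sublinear p /\ forall x, p x <= q x}).
  set (below := fun a b : T => boolp.asbool (forall x, proj1_sig b x <= proj1_sig a x)).
  destruct (@classical_sets.ZL_preorder T (exist _ q (conj Hq (fun x => Rle_refl _))) below)
    as [[p [Hp Hpq]] Hmax]; unfold below in *.
  - intro t. apply boolp.asboolT. intro x. lra.
  - intros r s t H1 H2. apply boolp.asboolT. intro x.
    apply boolp.asboolW in H1, H2. specialize (H1 x). specialize (H2 x). lra.
  - intros C HC.
    destruct (classic (exists s, C s)) as [[s0 Hs0]|Hempty].
    2: { exists (exist _ q (conj Hq (fun x => Rle_refl _))). intros s Hs. exfalso. eauto. }
    destruct (sublinear_chain_inf q (fun p => exists s : T, C s /\ proj1_sig s = p))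
      as [pinf [Hs [Hpq Hlow]]].
    + exists (proj1_sig s0), s0. auto.
    + intros p [s [_ <-]]. exact (proj2_sig s).
    + intros p p' [s [Hs <-]] [s' [Hs' <-]].
      destruct (HC s s' Hs Hs') as [H|H]; apply boolp.asboolW in H; auto.
    + exists (exist _ pinf (conj Hs Hpq)). intros s Hs0'. apply boolp.asboolT.
      apply Hlow. eauto.
  - exists p. split; [exact Hp|split; [exact Hpq|]]. intros s Hs Hsp.
    assert (Hsq : forall x, s x <= q x) by (intro x; apply Rle_trans with (p x); auto).
    apply boolp.asboolW. apply (Hmax (exist _ s (conj Hs Hsq))). simpl.
    apply boolp.asboolT. exact Hsp.
Qed.

(* A minimal sublinear functional is additive: for fixed y, the functional
   x |-> inf_{t >= 0} p (x + t y) - t p y is sublinear and below p, hence equal to p. *)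
Lemma minimal_sublinear_additive (p : X -> R) : sublinear p ->
  (forall s, sublinear s -> (forall x, s x <= p x) -> forall x, p x <= s x) ->
  forall x y, p (vadd x y) = p x + p y.
Proof.
  intros Hp Hmin x0 y.
  set (V := fun x r => exists t, 0 <= t /\ r = p (vadd x (vscal t y)) - t * p y).
  destruct (choice (fun x g => is_glb (V x) g)) as [py Hpy].
  { intro x. apply glb_exists with (- p (vopp x)).
    - exists (p (vadd x (vscal 0 y)) - 0 * p y), 0. split; [lra|reflexivity].
    - intros r [t [Ht ->]].
      pose proof (proj1 Hp (vadd x (vscal t y)) (vopp x)) as H.
      fold (vsub (vadd x (vscal t y)) x) in H.
      rewrite vsub_addl, sublinear_scal_nonneg in H by assumption. lra. }
  assert (Hpy_in : forall x t, 0 <= t -> py x <= p (vadd x (vscal t y)) - t * p y).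
  { intros x t Ht. apply (glb_le _ _ _ (Hpy x)). exists t. auto. }
  assert (Hsub : sublinear py).
  { apply sublinear_intro.
    - intros x x'. apply (glb_add _ _ _ _ _ (Hpy x) (Hpy x')).
      intros r1 r2 [t1 [Ht1 ->]] [t2 [Ht2 ->]].
      apply Rle_trans with (p (vadd (vadd x x') (vscal (t1 + t2) y)) - (t1 + t2) * p y).
      + apply Hpy_in. lra.
      + rewrite vscal_distr_s, vadd_ACA.
        pose proof (proj1 Hp (vadd x (vscal t1 y)) (vadd x' (vscal t2 y))). lra.
    - intros a x Ha. apply (glb_scale _ _ _ _ Ha (Hpy x)).
      intros r [t [Ht ->]].
      apply Rle_trans with (p (vadd (vscal a x) (vscal (a * t) y)) - (a * t) * p y).
      + apply Hpy_in. nra.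
      + rewrite <- vscal_assoc, <- vscal_distr_v, (proj2 Hp a _ Ha). lra. }
  assert (Hle : forall x, py x <= p x).
  { intro x. pose proof (Hpy_in x 0 (Rle_refl 0)) as H. rewrite vscal_0, vadd_0r in H. lra. }
  pose proof (Hmin py Hsub Hle x0) as H1.
  pose proof (Hpy_in x0 1 ltac:(lra)) as H2. rewrite vscal_1 in H2.
  apply Rle_antisym; [apply (proj1 Hp)|lra].
Qed.

Lemma minimal_sublinear_linear (p : X -> R) : sublinear p ->
  (forall s, sublinear s -> (forall x, s x <= p x) -> forall x, p x <= s x) ->
  (forall x y, p (vadd x y) = p x + p y) /\ (forall a x, p (vscal a x) = a * p x).
Proof.
  intros Hp Hmin. pose proof (minimal_sublinear_additive p Hp Hmin) as Hadd.
  split; [exact Hadd|]. intros a x.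
  destruct (Rle_lt_dec 0 a) as [Ha|Ha]; [now apply sublinear_scal_nonneg|].
  pose proof (Hadd (vscal a x) (vscal (- a) x)) as H.
  rewrite <- vscal_distr_s, Rplus_opp_r, vscal_0, sublinear_zero,
    (sublinear_scal_nonneg p (- a)) in H by (auto; lra).
  nra.
Qed.

End Sublinear.

(* The sublinear gauge q x = inf_t ||x - t x0|| + t ||x0||: it is dominated by the norm
   and q (- x0) <= - ||x0||, so every linear functional below q norms x0. *)
Lemma norming_gauge {X : NormedSpace} (x0 : X) :
  exists q, sublinear q /\ (forall x, q x <= vnorm x) /\ q (vopp x0) <= - vnorm x0.
Proof.
  set (V := fun x r => exists t, r = vnorm (vsub x (vscal t x0)) + t * vnorm x0).
  destruct (choice (fun x g => is_glb (V x) g)) as [q Hq].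
  { intro x. apply glb_exists with (- vnorm x).
    - exists (vnorm (vsub x (vscal 0 x0)) + 0 * vnorm x0), 0. reflexivity.
    - intros r [t ->]. pose proof (vnorm_sub_ge x (vscal t x0)) as H.
      rewrite vnorm_scal in H. pose proof (Rle_abs t). pose proof (Rle_abs (- t)) as Ht.
      rewrite Rabs_Ropp in Ht. pose proof (vnorm_nonneg x0). nra. }
  assert (Hq_in : forall x t, q x <= vnorm (vsub x (vscal t x0)) + t * vnorm x0).
  { intros x t. apply (glb_le _ _ _ (Hq x)). exists t. reflexivity. }
  exists q. split; [|split].
  - apply sublinear_intro.
    + intros x y. apply (glb_add _ _ _ _ _ (Hq x) (Hq y)).
      intros r1 r2 [t1 ->] [t2 ->].
      eapply Rle_trans; [apply (Hq_in _ (t1 + t2))|].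
      unfold vsub. rewrite vscal_distr_s, vopp_add, vadd_ACA.
      pose proof (vnorm_triangle _ (vsub x (vscal t1 x0)) (vsub y (vscal t2 x0))).
      unfold vsub in *. lra.
    + intros a x Ha. apply (glb_scale _ _ _ _ Ha (Hq x)).
      intros r [t ->]. eapply Rle_trans; [apply (Hq_in _ (a * t))|].
      rewrite <- vscal_assoc, <- vscal_sub, vnorm_scal, Rabs_pos_eq by lra. lra.
  - intro x. pose proof (Hq_in x 0). rewrite vscal_0, vsub_0r in H. lra.
  - pose proof (Hq_in (vopp x0) (-1)) as H. rewrite <- vopp_scal, vsub_diag, vnorm0 in H. lra.
Qed.

Theorem norming_functional_exists {X : NormedSpace} (x0 : X) : exists f, norming f x0.
Proof.
  destruct (norming_gauge x0) as [q [Hq [Hqn Hqx0]]].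
  destruct (minimal_sublinear_below q Hq) as [p [Hp [Hpq Hmin]]].
  destruct (minimal_sublinear_linear p Hp Hmin) as [Hadd Hsc].
  assert (Hopp : forall x, p (vopp x) = - p x) by (intro x; rewrite vopp_scal, Hsc; ring).
  assert (Hb : forall x, Rabs (p x) <= vnorm x).
  { intro x. apply Rabs_le. pose proof (Hpq x). pose proof (Hqn x).
    pose proof (Hpq (vopp x)). pose proof (Hqn (vopp x)). rewrite Hopp, vnorm_opp in *. lra. }
  exists p. split; [|split; [exact Hb|]].
  - split; [exact Hadd|split; [exact Hsc|]]. exists 1. intro x. rewrite Rmult_1_l. apply Hb.
  - pose proof (Hb x0). pose proof (Rle_abs (p x0)). pose proof (Hpq (vopp x0)).
    rewrite Hopp in *. lra.
Qed.

Section LipschitzMaps.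
Context {X : NormedSpace} (T : X -> X).

Lemma lip_norm_one_bound : lip_norm_is T 1 ->
  forall x y, vnorm (vsub (T x) (T y)) <= vnorm (vsub x y).
Proof.
  intros [Hub _] x y. destruct (classic (x = y)) as [->|Hne].
  - rewrite !vsub_diag. lra.
  - pose proof (vnorm_sub_pos x y Hne) as Hp.
    assert (H : vnorm (vsub (T x) (T y)) / vnorm (vsub x y) <= 1) by (apply Hub; eauto).
    apply Rmult_le_reg_r with (/ vnorm (vsub x y)); [apply Rinv_0_lt_compat; lra|].
    rewrite Rinv_r by lra. exact H.
Qed.

Lemma lip_norm_one_almost_attained (d : R) : lip_norm_is T 1 -> 0 < d ->
  exists x y, x <> y /\ (1 - d) * vnorm (vsub x y) < vnorm (vsub (T x) (T y)).
Proof.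
  intros [_ Hl] Hd. apply NNPP. intro Hno.
  assert (1 <= 1 - d); [|lra].
  apply Hl. intros r [x [y [Hxy ->]]].
  pose proof (vnorm_sub_pos x y Hxy).
  assert (vnorm (vsub (T x) (T y)) <= (1 - d) * vnorm (vsub x y))
    by (apply Rnot_lt_le; intro H'; apply Hno; eauto).
  apply Rmult_le_reg_r with (vnorm (vsub x y)); [lra|].
  unfold Rdiv. rewrite Rmult_assoc, Rinv_l by lra. lra.
Qed.

Lemma omega_nonneg (w : R) : (exists x : X, x <> vzero) -> omega_is T w -> 0 <= w.
Proof.
  intros [x0 Hx0] [Hub _].
  destruct (norming_functional_exists x0) as [f Hf].
  set (F := fun x => vnorm x0 * f x).
  assert (HF : in_D (vsub x0 vzero) F) by (rewrite vsub_0r; now apply norming_in_D).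
  pose proof (vnorm_sub_pos x0 vzero Hx0) as Hp.
  eapply Rle_trans;
    [|apply Hub; exists x0, vzero, F; split; [exact Hx0|split; [exact HF|reflexivity]]].
  apply Rmult_le_pos; [apply Rabs_pos|]. left. apply Rinv_0_lt_compat, pow_lt, Hp.
Qed.

Lemma omega_norming_bound (w : R) (f : X -> R) (a d : X) :
  omega_is T w -> norming f d -> Rabs (f (vsub (T (vadd a d)) (T a))) <= w * vnorm d.
Proof.
  intros [Hub _] Hf. pose proof Hf as [Hlin _].
  destruct (classic (d = vzero)) as [->|Hd].
  - rewrite vadd_0r, vsub_diag, (lin0 Hlin), vnorm0, Rabs_R0. lra.
  - pose proof (vnorm_pos d Hd) as Hp.
    assert (Hne : vadd a d <> a).
    { intro E. apply Hd. rewrite <- (vsub_addl a d), E. apply vsub_diag. }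
    assert (H : Rabs (vnorm d * f (vsub (T (vadd a d)) (T a))) / vnorm d ^ 2 <= w).
    { apply Hub. exists (vadd a d), a, (fun x => vnorm d * f x). rewrite vsub_addl.
      split; [exact Hne|split; [now apply norming_in_D|reflexivity]]. }
    rewrite Rabs_mult, Rabs_pos_eq in H by lra.
    replace (vnorm d * Rabs (f (vsub (T (vadd a d)) (T a))) / vnorm d ^ 2)
      with (Rabs (f (vsub (T (vadd a d)) (T a))) / vnorm d) in H by (field; lra).
    apply Rmult_le_reg_r with (/ vnorm d); [apply Rinv_0_lt_compat; lra|].
    rewrite Rmult_assoc, Rinv_r by lra. unfold Rdiv in H. lra.
Qed.

End LipschitzMaps.

Lemma sum_abs_coef_nonneg {X : NormedSpace} (l : list (R * X)) : 0 <= sum_abs_coef l.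
Proof. induction l as [|[a s] l IH]; simpl; [lra|]. pose proof (Rabs_pos a). lra. Qed.

Lemma exists_sign (r : R) : exists s, Rabs s = 1 /\ s * r = Rabs r.
Proof.
  destruct (Rle_dec 0 r) as [H|H].
  - exists 1. rewrite Rabs_R1, Rabs_pos_eq by lra. split; [reflexivity|ring].
  - exists (-1). rewrite Rabs_left, (Rabs_left r) by lra. split; ring.
Qed.

(* Telescoping along q, q + c l_1, q + c (l_1 + l_2), ...: if every step c lambda_i s_i moves
   g o T by at most k |lambda_i|, then moving by c (sum lambda_i s_i) moves it by at most
   k sum |lambda_i|. *)
Lemma lincomb_path_bound {X : NormedSpace} (T : X -> X) (g : X -> R) (c k : R)
  (l : list (R * X)) : in_dual X g ->
  (forall p a, In p l ->
     Rabs (g (vsub (T (vadd a (vscal (c * fst p) (snd p)))) (T a))) <= k * Rabs (fst p)) ->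
  forall q, Rabs (g (vsub (T (vadd q (vscal c (lincomb l)))) (T q))) <= k * sum_abs_coef l.
Proof.
  intros Hg. induction l as [|[lam s] l IH]; intros Hl q; simpl.
  - rewrite vscal_zero, vadd_0r, vsub_diag, (lin0 Hg), Rabs_R0. lra.
  - rewrite vscal_distr_v, vscal_assoc, vadd_assoc.
    set (q' := vadd q (vscal (c * lam) s)).
    set (q'' := vadd q' (vscal c (lincomb l))).
    assert (E : g (vsub (T q'') (T q)) = g (vsub (T q'') (T q')) + g (vsub (T q') (T q)))
      by (rewrite !(lin_sub Hg); ring).
    rewrite E.
    pose proof (IH (fun p a H => Hl p a (or_intror H)) q') as H1.
    pose proof (Hl (lam, s) q (or_introl eq_refl)) as H2. simpl in H2.
    pose proof (Rabs_triang (g (vsub (T q'') (T q'))) (g (vsub (T q') (T q)))).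
    fold q' in H2. fold q'' in H1. rewrite Rmult_plus_distr_l. lra.
Qed.

Lemma some_step_is_large {X : NormedSpace} (T : X -> X) (g : X -> R) (x y : X)
  (c eps eta : R) (l : list (R * X)) :
  (forall x y, vnorm (vsub (T x) (T y)) <= vnorm (vsub x y)) ->
  in_dual X g -> (forall z, Rabs (g z) <= vnorm z) ->
  0 < c -> eta <= 1 -> sum_abs_coef l <= 1 ->
  vnorm (vsub x (vadd y (vscal c (lincomb l)))) < c * eps ->
  (1 - eta) * c + c * eps <= g (vsub (T x) (T y)) ->
  exists p a, In p l /\
    (1 - eta) * c * Rabs (fst p) < Rabs (g (vsub (T (vadd a (vscal (c * fst p) (snd p)))) (T a))).
Proof.
  intros HT Hg Hgb Hc Heta Hsum Hnear Hgxy. apply NNPP. intro Hno.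
  set (p := vadd y (vscal c (lincomb l))) in *.
  assert (Hpath : Rabs (g (vsub (T p) (T y))) <= (1 - eta) * c * sum_abs_coef l).
  { apply (lincomb_path_bound T g c _ l Hg). intros q a Hq.
    apply Rnot_lt_le. intro H. apply Hno. eauto. }
  assert (Hsplit : g (vsub (T x) (T y)) = g (vsub (T x) (T p)) + g (vsub (T p) (T y)))
    by (rewrite !(lin_sub Hg); ring).
  pose proof (Hgb (vsub (T x) (T p))) as B1. pose proof (HT x p) as B2.
  pose proof (Rle_abs (g (vsub (T x) (T p)))) as B3.
  pose proof (Rle_abs (g (vsub (T p) (T y)))) as B4.
  pose proof (sum_abs_coef_nonneg l) as B5.
  assert ((1 - eta) * c * sum_abs_coef l <= (1 - eta) * c)
    by (assert (0 <= (1 - eta) * c) by nra; nra).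
  lra.
Qed.

(* If a step u of length at most K is seen by a norm-one
   functional g as having length at least (1 - eps) K, and T stretches it (as seen by g) by
   more than (1 - eta) K, then testing omega(T) on the enlarged step d = u +- t (T(a+u) - T a)
   forces  1 - eps + t (1 - eta) < 1 + t w (1 + t) + t^2. *)
Lemma large_step_bound {X : NormedSpace} (T : X -> X) (w eps eta t K : R)
  (g : X -> R) (a u : X) :
  (forall x y, vnorm (vsub (T x) (T y)) <= vnorm (vsub x y)) ->
  (forall f d b, norming f d -> Rabs (f (vsub (T (vadd b d)) (T b))) <= w * vnorm d) ->
  0 <= w -> 0 < t -> 0 < eta ->
  in_dual X g -> (forall x, Rabs (g x) <= vnorm x) ->
  vnorm u <= K -> (1 - eps) * K <= g u ->
  (1 - eta) * K < Rabs (g (vsub (T (vadd a u)) (T a))) ->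
  1 - eps + t * (1 - eta) < 1 + t * w * (1 + t) + t * t.
Proof.
  intros HT Hw Hw0 Ht Heta Hg Hgb Hu Hgu Hbig.
  set (DT := vsub (T (vadd a u)) (T a)) in *.
  assert (HDT : vnorm DT <= K).
  { pose proof (HT (vadd a u) a) as H. rewrite vsub_addl in H. fold DT in H. lra. }
  assert (HK : 0 < K) by (pose proof (Hgb DT); nra).
  destruct (exists_sign (g DT)) as [s [Hs HsDT]].
  set (tau := t * s).
  assert (Htau : Rabs tau = t) by (unfold tau; rewrite Rabs_mult, Hs, Rabs_pos_eq by lra; ring).
  set (d := vadd u (vscal tau DT)).
  (* g sees d as long: g d = g u + t |g DT|. *)
  assert (Hnd : (1 - eps) * K + t * ((1 - eta) * K) < vnorm d).
  { assert (Hgd : g d = g u + t * Rabs (g DT))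
      by (unfold d, tau; rewrite (lin_add Hg), (lin_scal Hg), <- HsDT; ring).
    pose proof (Hgb d). pose proof (Rle_abs (g d)).
    assert (t * ((1 - eta) * K) < t * Rabs (g DT)) by (apply Rmult_lt_compat_l; lra).
    lra. }
  destruct (norming_functional_exists d) as [f Hf].
  pose proof Hf as [Hfl [Hfb Hfd]].
  (* ||d|| = f u + tau f DT <= K + t |f DT| *)
  assert (Hdec : vnorm d <= K + t * Rabs (f DT)).
  { rewrite <- Hfd. unfold d. rewrite (lin_add Hfl), (lin_scal Hfl).
    pose proof (Hfb u). pose proof (Rle_abs (f u)).
    pose proof (Rle_abs (tau * f DT)) as Hstep. rewrite Rabs_mult, Htau in Hstep. lra. }
  (* |f DT| <= w ||d|| + t K, comparing the steps from a to a + u and to a + d. *)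
  assert (HfDT : Rabs (f DT) <= w * vnorm d + t * K).
  { assert (Hclose : vnorm (vsub (vadd a u) (vadd a d)) <= t * K).
    { rewrite vsub_add2, vnorm_sub_sym. unfold d at 1. rewrite vsub_addl, vnorm_scal, Htau.
      apply Rmult_le_compat_l; lra. }
    assert (E : f DT = f (vsub (T (vadd a d)) (T a)) + f (vsub (T (vadd a u)) (T (vadd a d))))
      by (unfold DT; rewrite !(lin_sub Hfl); ring).
    pose proof (Hw f d a Hf). pose proof (Hfb (vsub (T (vadd a u)) (T (vadd a d)))).
    pose proof (HT (vadd a u) (vadd a d)).
    pose proof (Rabs_triang (f (vsub (T (vadd a d)) (T a)))
                            (f (vsub (T (vadd a u)) (T (vadd a d))))).
    rewrite E. lra. }
  assert (Hdup : vnorm d <= K + t * K).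
  { unfold d. pose proof (vnorm_triangle _ u (vscal tau DT)) as H.
    rewrite vnorm_scal, Htau in H. pose proof (Rmult_le_compat_l t _ _ (Rlt_le _ _ Ht) HDT). lra. }
  assert (Htw : t * w * vnorm d <= t * w * (K + t * K))
    by (apply Rmult_le_compat_l; [apply Rmult_le_pos; lra | exact Hdup]).
  assert (Hfin : K * (1 - eps + t * (1 - eta)) < K * (1 + t * w * (1 + t) + t * t)).
  { assert (t * Rabs (f DT) <= t * (w * vnorm d + t * K)) by (apply Rmult_le_compat_l; lra).
    nra. }
  exact (Rmult_lt_reg_l _ _ _ HK Hfin).
Qed.

(* The step is c lambda s, where s lies in the slice and lambda is a coefficient of
   the absolutely convex combination approximating the direction of x - y. *)
Lemma lush_stretched_step {X : NormedSpace} (T : X -> X) (eps eta : R) :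
  lush X -> lip_norm_is T 1 -> 0 < eps < 1 -> eta <= 1 ->
  (1 - eta) + eps <= (1 - eps) * (1 - eps) ->
  exists (g : X -> R) (u a : X) (K : R),
    in_dual X g /\ (forall x, Rabs (g x) <= vnorm x) /\
    vnorm u <= K /\ (1 - eps) * K <= g u /\
    (1 - eta) * K < Rabs (g (vsub (T (vadd a u)) (T a))).
Proof.
  intros Hlush HL Heps Heta Hpar.
  pose proof (lip_norm_one_bound T HL) as Hnonexp.
  destruct (lip_norm_one_almost_attained T eps HL (proj1 Heps)) as [x [y [Hxy Hstretch]]].
  set (c := vnorm (vsub x y)) in *. set (N := vnorm (vsub (T x) (T y))) in *.
  assert (Hc : 0 < c) by (apply vnorm_sub_pos, Hxy).
  assert (HN : 0 < N) by nra.
  set (v := vscal (/ c) (vsub x y)). set (z := vscal (/ N) (vsub (T x) (T y))).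
  assert (Hv : vnorm v = 1)
    by (unfold v; rewrite vnorm_scal, Rabs_pos_eq by (apply Rlt_le, Rinv_0_lt_compat; lra);
        fold c; field; lra).
  assert (Hz : vnorm z = 1)
    by (unfold z; rewrite vnorm_scal, Rabs_pos_eq by (apply Rlt_le, Rinv_0_lt_compat; lra);
        fold N; field; lra).
  destruct (Hlush v z Hv Hz eps (proj1 Heps))
    as [g [[Hg Hg1] [[_ Hgz] [a0 [[l [Hl [Hsum ->]]] Hdist]]]]].
  pose proof (dual_bound Hg Hg1) as Hgb.
  assert (Hgxy : (1 - eta) * c + c * eps <= g (vsub (T x) (T y))).
  { assert (E : g (vsub (T x) (T y)) = N * g z)
      by (unfold z; rewrite (lin_scal Hg); field; lra).
    assert (N * (1 - eps) < N * g z) by (apply Rmult_lt_compat_l; lra).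
    assert ((1 - eps) * c * (1 - eps) <= N * (1 - eps)) by (apply Rmult_le_compat_r; lra).
    nra. }
  assert (Hnear : vnorm (vsub x (vadd y (vscal c (lincomb l)))) < c * eps).
  { assert (Hx : x = vadd y (vscal c v)).
    { unfold v. rewrite vscal_assoc, Rinv_r, vscal_1, vadd_comm by lra.
      symmetry. apply vsub_add_cancel. }
    rewrite Hx at 1. rewrite vsub_add2, <- vscal_sub, vnorm_scal, Rabs_pos_eq by lra.
    apply Rmult_lt_compat_l; assumption. }
  destruct (some_step_is_large T g x y c eps eta l Hnonexp Hg Hgb Hc Heta Hsum Hnear Hgxy)
    as [[lam s] [a [Hin Hbig]]]; simpl in Hbig.
  destruct (Hl _ Hin) as [Hs1 Hgs]; simpl in Hs1, Hgs.
  (* flip the sign of g so that it sees the step c lambda s positively *)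
  destruct (exists_sign lam) as [rho [Hrho Hrl]].
  assert (HK : 0 <= c * Rabs lam) by (apply Rmult_le_pos; [lra | apply Rabs_pos]).
  exists (fun z => rho * g z), (vscal (c * lam) s), a, (c * Rabs lam).
  split; [now apply in_dual_scale|]. split; [|split; [|split]].
  - intro u. rewrite Rabs_mult, Hrho, Rmult_1_l. apply Hgb.
  - rewrite vnorm_scal, Rabs_mult, (Rabs_pos_eq c) by lra.
    pose proof (Rmult_le_compat_l _ _ _ HK Hs1). lra.
  - rewrite (lin_scal Hg).
    replace (rho * (c * lam * g s)) with (c * Rabs lam * g s) by (rewrite <- Hrl; ring).
    assert (Hgs1 : 1 - eps <= g s) by lra.
    pose proof (Rmult_le_compat_l _ _ _ HK Hgs1). lra.
  - rewrite Rabs_mult, Hrho, Rmult_1_l, <- Rmult_assoc. exact Hbig.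
Qed.

(* The main inequality: on a nontrivial lush space every T with ||T||_L = 1 has omega(T) >= 1.
   With e = 1 - w > 0, the choice t = eta = e/4, eps = e^2/64 makes large_step_bound fail. *)
Lemma omega_ge_one {X : NormedSpace} (T : X -> X) (w : R) :
  lush X -> (exists x : X, x <> vzero) -> lip_norm_is T 1 -> omega_is T w -> 1 <= w.
Proof.
  intros Hlush Hnt HL Hw.
  pose proof (omega_nonneg T w Hnt Hw) as Hw0.
  apply Rnot_lt_le. intro Hlt.
  set (e := 1 - w). set (t := e / 4). set (eps := e * e / 64).
  assert (He : 0 < e <= 1) by (unfold e; lra).
  assert (Ht : 0 < t <= 1) by (unfold t; lra).
  assert (Heps : 0 < eps < 1) by (unfold eps; nra).
  assert (Hpar : (1 - t) + eps <= (1 - eps) * (1 - eps)) by (unfold t, eps; nra).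
  destruct (lush_stretched_step T eps t Hlush HL Heps (proj2 Ht) Hpar)
    as [g [u [a [K [Hg [Hgb [Hu [Hgu Hbig]]]]]]]].
  pose proof (large_step_bound T w eps t t K g a u (lip_norm_one_bound T HL)
                (fun f d b Hf => omega_norming_bound T w f b d Hw Hf)
                Hw0 (proj1 Ht) (proj1 Ht) Hg Hgb Hu Hgu Hbig) as Hfinal.
  assert (Hw_e : w = 1 - e) by (unfold e; ring).
  rewrite Hw_e in Hfinal. unfold t, eps in Hfinal. clearbody e.
  assert (0 < e * e * e) by (apply Rmult_lt_0_compat; nra).
  nra.
Qed.

Lemma identity_lip_norm {X : NormedSpace} :
  (exists x : X, x <> vzero) -> lip_norm_is (fun x : X => x) 1.
Proof.
  intros [x0 Hx0]. split.
  - intros r [x [y [Hxy ->]]]. pose proof (vnorm_sub_pos x y Hxy).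
    unfold Rdiv. rewrite Rinv_r by lra. lra.
  - intros b Hb. apply Hb. exists x0, vzero. split; [exact Hx0|].
    pose proof (vnorm_sub_pos x0 vzero Hx0). unfold Rdiv. rewrite Rinv_r by lra. reflexivity.
Qed.

Lemma identity_omega {X : NormedSpace} :
  (exists x : X, x <> vzero) -> omega_is (fun x : X => x) 1.
Proof.
  intros [x0 Hx0].
  assert (Hval : forall (x y : X) (F : X -> R), x <> y -> in_D (vsub x y) F ->
            Rabs (F (vsub x y)) / vnorm (vsub x y) ^ 2 = 1).
  { intros x y F Hxy [_ [c [_ [H1 H2]]]]. rewrite H1, H2.
    pose proof (vnorm_sub_pos x y Hxy).
    rewrite Rabs_pos_eq by (apply pow_le; lra). field. lra. }
  split.
  - intros r [x [y [F [Hxy [HF ->]]]]]. rewrite (Hval x y F Hxy HF). lra.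
  - intros b Hb. destruct (norming_functional_exists (vsub x0 vzero)) as [f Hf].
    assert (HF : in_D (vsub x0 vzero) (fun x => vnorm (vsub x0 vzero) * f x))
      by (apply norming_in_D; [exact Hf | rewrite vsub_0r; exact Hx0]).
    rewrite <- (Hval x0 vzero _ Hx0 HF). apply Hb.
    exists x0, vzero, (fun x => vnorm (vsub x0 vzero) * f x). auto.
Qed.

Theorem theorem2p7 (X : NormedSpace) (Hcomplete : complete X)
  (Hnontriv : exists x : X, x <> vzero) (Hlush : lush X) :
  nonlinear_numerical_index_is X 1.
Proof.
  split.
  - intros w [T [_ [HL Hw]]]. exact (omega_ge_one T w Hlush Hnontriv HL Hw).
  - intros b Hb. apply Hb. exists (fun x => x). split; [|split].
    + split; [reflexivity|]. exists 1. intros x y. lra.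
    + exact (identity_lip_norm Hnontriv).
    + exact (identity_omega Hnontriv).
Qed.
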